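(* For all $\lambda$-terms $M,N$: if $M \twoheadrightarrow_\beta N$, then $\mathrm{BT}^c(M) \geq \mathrm{BT}^c(N)$, i.e. $N$ improves $M$ globally.
   Context: Untyped $\lambda$-calculus modulo $\alpha$; $\twoheadrightarrow_\beta$ is the reflexive-transitive closure of $\beta$-reduction. A head reduction step is a $\beta$-step of the form $\lambda x_1\ldots x_n.(\lambda y.M)NN_1\ldots N_m \to \lambda x_1\ldots x_n.M[y:=N]N_1\ldots N_m$ ($n,m\ge0$); a head normal form (hnf) is a term $\lambda x_1\ldots x_n.\,yN_1\ldots N_m$. The clocked Böhm tree $\mathrm{BT}^c(M)$ is the annotated, possibly infinite tree defined coinductively: if $M$ has no hnf then $\mathrm{BT}^c(M)=\bot$; otherwise the (unique) head reduction of $M$ to hnf has some length $k$, say $M \to_h^k \lambda x_1\ldots x_n.\,yM_1\ldots M_m$, and then $\mathrm{BT}^c(M)$ is the tree $\lambda x_1\ldots x_n.\,y\,\mathrm{BT}^c(M_1)\ldots\mathrm{BT}^c(M_m)$ whose root node carries the annotation $k$. Positions are finite sequences over $\{0,1,2\}$: the empty sequence is the root, $0p$ in $\lambda x.T$ is position $p$ of $T$, $1p$ (resp. $2p$) in an application $T_1T_2$ is position $p$ of $T_1$ (resp. $T_2$). For annotated trees $T_1,T_2$, write $T_1 \ge T_2$ if $T_1$ and $T_2$ are identical after erasing all annotations, and for every position $p$ either neither subtree at $p$ carries a root annotation, or both do, with annotations $k_1,k_2$ satisfying $k_1 \ge k_2$. $N$ improves $M$ globally if $\mathrm{BT}^c(N)\le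 \mathrm{BT}^c(M)$. *)

(* Untyped lambda calculus with de Bruijn indices
   (so terms are identified modulo alpha by construction). *)
From Stdlib Require Import Arith List Relations.
Import ListNotations.

Inductive term : Type :=
| Var : nat -> term
| App : term -> term -> term
| Lam : term -> term.

Fixpoint shift (c : nat) (t : term) : term :=
  match t with
  | Var x => Var (if c <=? x then S x else x)
  | App t1 t2 => App (shift c t1) (shift c t2)
  | Lam t1 => Lam (shift (S c) t1)
  end.

(* subst k u t : capture-avoiding substitution of u for variable k in t,
   decrementing the free variables above k (the binder is removed). *)
Fixpoint subst (k : nat) (u : term) (t : term) : term :=
  match t with
  | Var x => if x =? k then u else if k <? x then Var (pred x) else Var x
  | App t1 t2 => App (subst k u t1) (subst k u t2)
  | Lam t1 => Lam (subst (S k) (shift 0 u) t1)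
  end.

Inductive beta : term -> term -> Prop :=
| beta_redex t u : beta (App (Lam t) u) (subst 0 u t)
| beta_appl t t' u : beta t t' -> beta (App t u) (App t' u)
| beta_appr t u u' : beta u u' -> beta (App t u) (App t u')
| beta_lam t t' : beta t t' -> beta (Lam t) (Lam t').

Definition beta_star : term -> term -> Prop := clos_refl_trans term beta.

Inductive hstep : term -> term -> Prop :=
| h_beta t u : hstep (App (Lam t) u) (subst 0 u t)
| h_app t t' u : hstep t t' -> (forall b, t <> Lam b) -> hstep (App t u) (App t' u)
| h_lam t t' : hstep t t' -> hstep (Lam t) (Lam t').

Inductive hred : nat -> term -> term -> Prop :=
| hred_0 t : hred 0 t t
| hred_S k t t' t'' : hstep t t' -> hred k t' t'' -> hred (S k) t t''.

Inductive neutral : term -> Prop :=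
| neu_var x : neutral (Var x)
| neu_app t u : neutral t -> neutral (App t u).

Inductive is_hnf : term -> Prop :=
| hnf_neu t : neutral t -> is_hnf t
| hnf_lam t : is_hnf t -> is_hnf (Lam t).

Definition has_hnf (M : term) : Prop := exists H, beta_star M H /\ is_hnf H.

Inductive node : Type :=
| NBot : node
| NLam : node
| NApp : node
| NVar : nat -> node.

Definition head_node (t : term) : node :=
  match t with
  | Var x => NVar x
  | App _ _ => NApp
  | Lam _ => NLam
  end.

(* Positions: lists over {0,1,2} as in the paper. *)
Definition position := list nat.

(* An annotated, possibly infinite tree is given by its position lookup:
   T p nd a  means that position p exists in T, carries node label nd and
   annotation a (None = no root annotation at p). *)
Definition ctree := position -> node -> option nat -> Prop.

(* bt_at M p nd a : position p of BT^c(M) has label nd and annotation a.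
   sk_at H p nd a : same for the tree  \x1..xn. y BT^c(M1) .. BT^c(Mm)
   built from the hnf H = \x1..xn. y M1 .. Mm, without the root annotation. *)
Inductive bt_at : term -> position -> node -> option nat -> Prop :=
| bt_bot M : ~ has_hnf M -> bt_at M [] NBot None
| bt_root M k H : hred k M H -> is_hnf H -> bt_at M [] (head_node H) (Some k)
| bt_in M k H p nd a :
    hred k M H -> is_hnf H -> sk_at H p nd a -> p <> [] -> bt_at M p nd a
with sk_at : term -> position -> node -> option nat -> Prop :=
| sk_root t : sk_at t [] (head_node t) None
| sk_lam t p nd a : sk_at t p nd a -> sk_at (Lam t) (0 :: p) nd a
| sk_fun t u p nd a : sk_at t p nd a -> sk_at (App t u) (1 :: p) nd a
| sk_arg t u p nd a : bt_at u p nd a -> sk_at (App t u) (2 :: p) nd a.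

Definition BTc (M : term) : ctree := bt_at M.

Definition ctree_ge (T1 T2 : ctree) : Prop :=
  (forall p nd, (exists a, T1 p nd a) <-> (exists a, T2 p nd a)) /\
  (forall p nd1 a1 nd2 a2, T1 p nd1 a1 -> T2 p nd2 a2 ->
     match a1, a2 with
     | None, None => True
     | Some k1, Some k2 => k2 <= k1
     | _, _ => False
     end).

Definition improves_globally (N M : term) : Prop := ctree_ge (BTc M) (BTc N).

(** A beta step commutes with a head step up to at most one head step (the
    residual of the contracted head redex), and it preserves head normal forms
    up to reduction inside the arguments.  Hence if [M ->_h^k H] with [H] a
    head normal form and [M ->>_beta N], then [N ->_h^j H'] with [j <= k] and
    [H'] obtained from [H] by reducing its arguments; the trees are compared by
    induction on positions.  That a term with a head normal form head-reduces
    to one is the standardization theorem, proved with Plotkin-style standard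
    reductions. *)

From Stdlib Require Import Arith List Relations Lia Classical.
Import ListNotations.

Ltac nat_case :=
  match goal with
  | |- context [?a =? ?b] => destruct (Nat.eqb_spec a b)
  | |- context [?a <? ?b] => destruct (Nat.ltb_spec a b)
  | |- context [?a <=? ?b] => destruct (Nat.leb_spec a b)
  | _ : context [?a =? ?b] |- _ => destruct (Nat.eqb_spec a b)
  | _ : context [?a <? ?b] |- _ => destruct (Nat.ltb_spec a b)
  | _ : context [?a <=? ?b] |- _ => destruct (Nat.leb_spec a b)
  end.

Ltac nat_cases := repeat (cbn [shift subst pred] in *; nat_case); cbn [shift subst pred] in *.

Lemma shift_shift t c d : c <= d -> shift c (shift d t) = shift (S d) (shift c t).
Proof.
  revert c d; induction t; intros c d Hcd; cbn [shift].
  - nat_cases; f_equal; lia.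
  - rewrite IHt1, IHt2; auto.
  - rewrite IHt by lia; reflexivity.
Qed.

Lemma subst_shift t k u : subst k u (shift k t) = t.
Proof.
  revert k u; induction t; intros k u; cbn [shift subst].
  - nat_cases; f_equal; lia.
  - rewrite IHt1, IHt2; auto.
  - rewrite IHt; auto.
Qed.

Lemma shift_subst_le t c k u : c <= k ->
  shift c (subst k u t) = subst (S k) (shift c u) (shift c t).
Proof.
  revert c k u; induction t; intros c k u Hck; cbn [shift subst].
  - nat_cases; auto; try (f_equal; lia); lia.
  - rewrite IHt1, IHt2; auto.
  - rewrite IHt, (shift_shift u 0 c) by lia; reflexivity.
Qed.

Lemma shift_subst_ge t c k u : k <= c ->
  shift c (subst k u t) = subst k (shift c u) (shift (S c) t).
Proof.
  revert c k u; induction t; intros c k u Hkc; cbn [shift subst].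
  - nat_cases; auto; try (f_equal; lia); lia.
  - rewrite IHt1, IHt2; auto.
  - rewrite IHt, (shift_shift u 0 c) by lia; reflexivity.
Qed.

Lemma subst_subst t j k N u :
  subst (j + k) N (subst j u t) = subst j (subst (j + k) N u) (subst (S (j + k)) (shift j N) t).
Proof.
  revert j k N u; induction t; intros j k N u; cbn [shift subst].
  - nat_cases; auto; try (f_equal; lia); try lia; rewrite subst_shift; reflexivity.
  - rewrite IHt1, IHt2; auto.
  - f_equal. replace (S (j + k)) with (S j + k) by lia.
    rewrite IHt, shift_subst_le, (shift_shift N 0 j) by lia; reflexivity.
Qed.

Lemma subst0_subst t k N u :
  subst k N (subst 0 u t) = subst 0 (subst k N u) (subst (S k) (shift 0 N) t).
Proof. exact (subst_subst t 0 k N u). Qed.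

Lemma clos_rt_map {A : Type} (R : relation A) (f : A -> A) x y :
  (forall a b, R a b -> R (f a) (f b)) ->
  clos_refl_trans A R x y -> clos_refl_trans A R (f x) (f y).
Proof.
  intros Hf Hxy; induction Hxy.
  - apply rt_step, Hf; assumption.
  - apply rt_refl.
  - eapply rt_trans; eassumption.
Qed.

Lemma beta_shift c t t' : beta t t' -> beta (shift c t) (shift c t').
Proof.
  intros Hb; revert c; induction Hb; intros c; cbn [shift]; try (constructor; auto; fail).
  rewrite shift_subst_ge by lia; constructor.
Qed.

Lemma beta_subst k N t t' : beta t t' -> beta (subst k N t) (subst k N t').
Proof.
  intros Hb; revert k N; induction Hb; intros k N; cbn [subst]; try (constructor; auto; fail).
  rewrite subst0_subst; constructor.
Qed.

Lemma beta_star_appl t t' u : beta_star t t' -> beta_star (App t u) (App t' u).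
Proof. apply (clos_rt_map _ (fun s => App s u)); intros; constructor; assumption. Qed.

Lemma beta_star_appr t u u' : beta_star u u' -> beta_star (App t u) (App t u').
Proof. apply (clos_rt_map _ (App t)); intros; constructor; assumption. Qed.

Lemma beta_star_lam t t' : beta_star t t' -> beta_star (Lam t) (Lam t').
Proof. apply (clos_rt_map _ Lam); intros; constructor; assumption. Qed.

Lemma beta_star_subst_arg t k N N' : beta N N' -> beta_star (subst k N t) (subst k N' t).
Proof.
  revert k N N'; induction t; intros k N N' HN; cbn [subst].
  - destruct (n =? k); [apply rt_step; assumption | apply rt_refl].
  - eapply rt_trans; [apply beta_star_appl | apply beta_star_appr]; auto.
  - apply beta_star_lam, IHt, beta_shift; assumption.
Qed.

Lemma hstep_beta t t' : hstep t t' -> beta t t'.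
Proof. induction 1; constructor; assumption. Qed.

Lemma hred_beta_star k t t' : hred k t t' -> beta_star t t'.
Proof.
  induction 1; [apply rt_refl|].
  eapply rt_trans; [apply rt_step, hstep_beta|]; eassumption.
Qed.

Lemma hred_trans i j a b c : hred i a b -> hred j b c -> hred (i + j) a c.
Proof. induction 1; intros; [assumption | econstructor; eauto]. Qed.

Lemma hred_lam k t t' : hred k t t' -> hred k (Lam t) (Lam t').
Proof. induction 1; econstructor; eauto using h_lam. Qed.

Lemma hstep_functional t t1 t2 : hstep t t1 -> hstep t t2 -> t1 = t2.
Proof.
  intros H1; revert t2; induction H1; intros t2 H2; inversion H2; subst;
    try (exfalso; match goal with NL : forall b, _ <> Lam b |- _ => eapply NL; reflexivity end);
    f_equal; auto.
Qed.

Lemma neutral_hstep t t' : neutral t -> ~ hstep t t'.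
Proof.
  intros Hn; revert t'; induction Hn; intros t' Hs; inversion Hs; subst;
    [inversion Hn | eapply IHHn; eassumption].
Qed.

Lemma hnf_hstep t t' : is_hnf t -> ~ hstep t t'.
Proof.
  intros Hh; revert t'; induction Hh; intros t' Hs;
    [eapply neutral_hstep | inversion Hs; subst; eapply IHHh]; eassumption.
Qed.

Lemma hred_hnf_unique k k' M HM HM' :
  hred k M HM -> is_hnf HM -> hred k' M HM' -> is_hnf HM' -> k = k' /\ HM = HM'.
Proof.
  intros R; revert k' HM'; induction R as [t | k t t1 t2 Hs R IH];
    intros k' HM' Hh R' Hh'; inversion R' as [| ? ? t1' ? Hs' R1]; subst.
  - auto.
  - exfalso; exact (hnf_hstep _ _ Hh Hs').
  - exfalso; exact (hnf_hstep _ _ Hh' Hs).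
  - rewrite (hstep_functional _ _ _ Hs Hs') in *.
    destruct (IH _ _ Hh R1 Hh'); subst; auto.
Qed.

(** * Standardization *)

Inductive whstep : term -> term -> Prop :=
| wh_beta t u : whstep (App (Lam t) u) (subst 0 u t)
| wh_app t t' u : whstep t t' -> whstep (App t u) (App t' u).

Definition whred : term -> term -> Prop := clos_refl_trans term whstep.

Lemma whred_app t t' u : whred t t' -> whred (App t u) (App t' u).
Proof. apply (clos_rt_map _ (fun s => App s u)); intros; constructor; assumption. Qed.

Lemma whred_shift c t t' : whred t t' -> whred (shift c t) (shift c t').
Proof.
  apply clos_rt_map; intros a b Hab; induction Hab; cbn [shift].
  - rewrite shift_subst_ge by lia; constructor.
  - constructor; assumption.
Qed.

Lemma whred_subst k N t t' : whred t t' -> whred (subst k N t) (subst k N t').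
Proof.
  apply clos_rt_map; intros a b Hab; induction Hab; cbn [subst].
  - rewrite subst0_subst; constructor.
  - constructor; assumption.
Qed.

Lemma whstep_hstep t t' : whstep t t' -> hstep t t'.
Proof.
  induction 1; constructor; auto.
  intros b ->; inversion H.
Qed.

Lemma whred_hred t t' : whred t t' -> exists k, hred k t t'.
Proof.
  intros Hw; apply clos_rt_rt1n in Hw; induction Hw as [|x y z Hxy _ [k Hk]].
  - exists 0; constructor.
  - exists (S k); econstructor; eauto using whstep_hstep.
Qed.

Inductive std : term -> term -> Prop :=
| std_var M x : whred M (Var x) -> std M (Var x)
| std_lam M P Q : whred M (Lam P) -> std P Q -> std M (Lam Q)
| std_app M P Q P' Q' : whred M (App P Q) -> std P P' -> std Q Q' -> std M (App P' Q').

Lemma std_refl t : std t t.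
Proof. induction t; econstructor; eauto; apply rt_refl. Qed.

Lemma whred_std M M' N : whred M M' -> std M' N -> std M N.
Proof. intros Hw Hs; inversion Hs; subst; econstructor; eauto; eapply rt_trans; eassumption. Qed.

Lemma std_shift c M N : std M N -> std (shift c M) (shift c N).
Proof.
  intros Hs; revert c; induction Hs; intros c; cbn [shift];
    econstructor; eauto; apply (whred_shift c _ _ H).
Qed.

Lemma std_subst k M M' N N' : std M M' -> std N N' -> std (subst k N M) (subst k N' M').
Proof.
  intros Hs; revert k N N'; induction Hs; intros k N N' HN;
    pose proof (whred_subst k N _ _ H) as Hw; cbn [subst] in *.
  - destruct (x =? k); [eapply whred_std; eassumption|].
    destruct (k <? x); constructor; assumption.
  - econstructor; eauto using std_shift.
  - econstructor; eauto.
Qed.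

Lemma std_redex M P Q : std M (App (Lam P) Q) -> std M (subst 0 Q P).
Proof.
  intros Hs; inversion Hs as [| |? P0 Q0 ? ? Hw HP HQ]; subst.
  inversion HP as [|? P1 ? Hw1 HP1|]; subst.
  apply whred_std with (subst 0 Q0 P1).
  - eapply rt_trans; [eassumption|].
    eapply rt_trans; [apply whred_app; eassumption | apply rt_step; constructor].
  - apply std_subst; assumption.
Qed.

Lemma std_beta M N N' : std M N -> beta N N' -> std M N'.
Proof.
  intros Hs Hb; revert M Hs; induction Hb; intros M Hs.
  - apply std_redex; assumption.
  - inversion Hs; subst; econstructor; eauto.
  - inversion Hs; subst; econstructor; eauto.
  - inversion Hs; subst; econstructor; eauto.
Qed.

Lemma beta_star_std M N : beta_star M N -> std M N.
Proof.
  intros Hb; apply clos_rt_rtn1 in Hb; induction Hb;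
    [apply std_refl | eapply std_beta; eassumption].
Qed.

Lemma std_neutral M N : std M N -> neutral N -> exists M', whred M M' /\ neutral M'.
Proof.
  intros Hs; induction Hs; intros Hn; inversion Hn; subst.
  - exists (Var x); split; [assumption | constructor].
  - destruct (IHHs1 ltac:(assumption)) as [M' [Hw Hn']].
    exists (App M' Q); split; [eapply rt_trans; [|apply whred_app]; eassumption | constructor; assumption].
Qed.

Lemma std_hnf M H : std M H -> is_hnf H -> exists k H', hred k M H' /\ is_hnf H'.
Proof.
  intros Hs Hh; revert M Hs; induction Hh; intros M Hs.
  - destruct (std_neutral _ _ Hs H) as [M' [Hw Hn]].
    destruct (whred_hred _ _ Hw) as [k Hk].
    exists k, M'; split; [assumption | constructor; assumption].
  - inversion Hs; subst.
    destruct (IHHh _ ltac:(eassumption)) as [k [H' [R Hh']]].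
    destruct (whred_hred _ _ ltac:(eassumption)) as [k0 Hk0].
    exists (k0 + k), (Lam H'); split.
    + eapply hred_trans; [eassumption | apply hred_lam; assumption].
    + apply hnf_lam; assumption.
Qed.

Lemma has_hnf_hred M : has_hnf M -> exists k H, hred k M H /\ is_hnf H.
Proof. intros [H [Hb Hh]]; eapply std_hnf; [apply beta_star_std|]; eassumption. Qed.

(** * Beta reduction against head reduction *)

Lemma beta_to_lam_hstep t b : beta t (Lam b) -> (forall b', t <> Lam b') -> hstep t (Lam b).
Proof.
  intros Hb NL; inversion Hb; subst.
  - constructor.
  - exfalso; eapply NL; reflexivity.
Qed.

Lemma hstep_beta_commute M M1 N : hstep M M1 -> beta M N ->
  exists N1, clos_refl term hstep N N1 /\ beta_star M1 N1.
Proof.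
  intros Hs; revert N; induction Hs as [t u | t t' u Hs IH NL | t t' Hs IH]; intros N Hb.
  - inversion Hb as [| ? t1 ? Hb1 | ? ? u1 Hu |]; subst.
    + exists (subst 0 u t); split; [apply r_refl | apply rt_refl].
    + inversion Hb1 as [| | | ? t2 ? Ht]; subst.
      exists (subst 0 u t2); split; [apply r_step; constructor | apply rt_step, beta_subst; assumption].
    + exists (subst 0 u1 t); split; [apply r_step; constructor | apply beta_star_subst_arg; assumption].
  - inversion Hb as [b ? | ? t1 ? Hb1 | ? ? u1 Hu |]; subst.
    + exfalso; eapply NL; reflexivity.
    + destruct (classic (exists b, t1 = Lam b)) as [[b ->] | NL1].
      * (* [t] is a redex whose contractum is an abstraction: the beta step is the head step. *)
        rewrite (hstep_functional _ _ _ Hs (beta_to_lam_hstep _ _ Hb1 NL)).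
        exists (App (Lam b) u); split; [apply r_refl | apply rt_refl].
      * destruct (IH _ Hb1) as [N1 [HN1 Hb']].
        exists (App N1 u); split; [| apply beta_star_appl; assumption].
        destruct HN1 as [N1 Hs1 |]; [apply r_step; constructor | apply r_refl]; eauto.
    + exists (App t' u1); split.
      * apply r_step; constructor; assumption.
      * apply beta_star_appr, rt_step; assumption.
  - inversion Hb as [| | | ? t1 Hb1]; subst.
    destruct (IH _ Hb1) as [N1 [HN1 Hb']].
    exists (Lam N1); split; [| apply beta_star_lam; assumption].
    destruct HN1 as [N1 Hs1 |]; [apply r_step; constructor; assumption | apply r_refl].
Qed.

Lemma hstep_beta_star_commute M M1 N : hstep M M1 -> beta_star M N ->
  exists N1, clos_refl term hstep N N1 /\ beta_star M1 N1.
Proof.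
  intros Hs Hb; apply clos_rt_rt1n in Hb; revert M1 Hs.
  induction Hb as [| M M' N Hb Hb' IH]; intros M1 Hs.
  - exists M1; split; [apply r_step | apply rt_refl]; assumption.
  - destruct (hstep_beta_commute _ _ _ Hs Hb) as [M1' [[? Hs' |] HM]].
    + destruct (IH _ Hs') as [N1 [HN HM']].
      exists N1; split; [assumption | eapply rt_trans; eassumption].
    + exists N; split; [apply r_refl | eapply rt_trans; [eassumption | apply clos_rt1n_rt; assumption]].
Qed.

Inductive arg_red : term -> term -> Prop :=
| arg_red_var x : arg_red (Var x) (Var x)
| arg_red_lam t t' : arg_red t t' -> arg_red (Lam t) (Lam t')
| arg_red_app t t' u u' : arg_red t t' -> beta_star u u' -> arg_red (App t u) (App t' u').

Lemma arg_red_refl t : arg_red t t.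
Proof. induction t; constructor; auto; apply rt_refl. Qed.

Lemma arg_red_trans a b c : arg_red a b -> arg_red b c -> arg_red a c.
Proof.
  intros Hab; revert c; induction Hab; intros c Hbc; inversion Hbc; subst;
    constructor; eauto; eapply rt_trans; eassumption.
Qed.

Lemma arg_red_head_node t t' : arg_red t t' -> head_node t = head_node t'.
Proof. destruct 1; reflexivity. Qed.

Lemma neutral_beta t t' : neutral t -> beta t t' -> neutral t' /\ arg_red t t'.
Proof.
  intros Hn; revert t'; induction Hn as [x | t u Hn IH]; intros t' Hb; inversion Hb; subst.
  - inversion Hn.
  - destruct (IH _ ltac:(eassumption)).
    split; constructor; [assumption | assumption | apply rt_refl].
  - split; constructor; [assumption | apply arg_red_refl | apply rt_step; assumption].
Qed.

Lemma hnf_beta t t' : is_hnf t -> beta t t' -> is_hnf t' /\ arg_red t t'.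
Proof.
  intros Hh; revert t'; induction Hh as [t Hn | t Hh IH]; intros t' Hb.
  - destruct (neutral_beta _ _ Hn Hb); split; [constructor|]; assumption.
  - inversion Hb as [| | | ? t1 Hb1]; subst.
    destruct (IH _ Hb1); split; constructor; assumption.
Qed.

Lemma hnf_beta_star t t' : beta_star t t' -> is_hnf t -> is_hnf t' /\ arg_red t t'.
Proof.
  intros Hb; apply clos_rt_rt1n in Hb; induction Hb as [t | t t1 t2 Hb _ IH]; intros Hh.
  - split; [assumption | apply arg_red_refl].
  - destruct (hnf_beta _ _ Hh Hb) as [Hh1 Ha1]; destruct (IH Hh1) as [Hh2 Ha2].
    split; [assumption | eapply arg_red_trans; eassumption].
Qed.

Lemma hred_hnf_beta_star k M HM N : hred k M HM -> is_hnf HM -> beta_star M N ->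
  exists j HN, hred j N HN /\ j <= k /\ is_hnf HN /\ arg_red HM HN.
Proof.
  intros R; revert N; induction R as [M | k M M1 HM Hs R IH]; intros N Hh Hb.
  - destruct (hnf_beta_star _ _ Hb Hh) as [HhN Ha].
    exists 0, N; repeat split; auto; constructor.
  - destruct (hstep_beta_star_commute _ _ _ Hs Hb) as [N1 [[? HsN |] Hb1]];
      destruct (IH _ Hh Hb1) as [j [HN [RN [Hj [HhN Ha]]]]].
    + exists (S j), HN; repeat split; [econstructor; eassumption | lia | assumption | assumption].
    + exists j, HN; repeat split; auto; lia.
Qed.

Lemma has_hnf_beta_star M N : beta_star M N -> has_hnf N -> has_hnf M.
Proof. intros Hb [H [HbN Hh]]; exists H; split; [eapply rt_trans |]; eassumption. Qed.

Lemma hred_has_hnf k M H : hred k M H -> is_hnf H -> has_hnf M.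
Proof. intros R Hh; exists H; split; [eapply hred_beta_star |]; eassumption. Qed.

(** * Comparing the trees position by position *)

Definition annot_ge (a1 a2 : option nat) : Prop :=
  match a1, a2 with
  | None, None => True
  | Some k1, Some k2 => k2 <= k1
  | _, _ => False
  end.

Definition ctree_ge_at (T1 T2 : ctree) (p : position) : Prop :=
  (forall nd, (exists a, T1 p nd a) <-> (exists a, T2 p nd a)) /\
  (forall nd1 a1 nd2 a2, T1 p nd1 a1 -> T2 p nd2 a2 -> annot_ge a1 a2).

Lemma ctree_ge_at_single T1 T2 p nd0 a1 a2 :
  (forall nd a, T1 p nd a <-> nd = nd0 /\ a = a1) ->
  (forall nd a, T2 p nd a <-> nd = nd0 /\ a = a2) ->
  annot_ge a1 a2 -> ctree_ge_at T1 T2 p.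
Proof.
  intros E1 E2 Ha; split.
  - intros nd; split; intros [a Ht].
    + apply E1 in Ht as [-> ->]; exists a2; apply E2; auto.
    + apply E2 in Ht as [-> ->]; exists a1; apply E1; auto.
  - intros nd1 b1 nd2 b2 Ht1 Ht2.
    apply E1 in Ht1 as [_ ->]; apply E2 in Ht2 as [_ ->]; assumption.
Qed.

Lemma ctree_ge_at_empty T1 T2 p :
  (forall nd a, ~ T1 p nd a) -> (forall nd a, ~ T2 p nd a) -> ctree_ge_at T1 T2 p.
Proof. firstorder. Qed.

Lemma ctree_ge_at_transport T1 T2 S1 S2 p q :
  (forall nd a, T1 p nd a <-> S1 q nd a) -> (forall nd a, T2 p nd a <-> S2 q nd a) ->
  ctree_ge_at S1 S2 q -> ctree_ge_at T1 T2 p.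
Proof.
  intros E1 E2 [Hn Ha]; split.
  - intros nd; split; intros [a Ht].
    + destruct (proj1 (Hn nd) (ex_intro _ a (proj1 (E1 nd a) Ht))) as [a' Ht'].
      exists a'; apply E2; exact Ht'.
    + destruct (proj2 (Hn nd) (ex_intro _ a (proj1 (E2 nd a) Ht))) as [a' Ht'].
      exists a'; apply E1; exact Ht'.
  - intros nd1 a1 nd2 a2 Ht1 Ht2; apply (Ha nd1 a1 nd2 a2); [apply E1 | apply E2]; assumption.
Qed.

Lemma bt_at_nil_hnf k M HM nd a : hred k M HM -> is_hnf HM ->
  bt_at M [] nd a <-> nd = head_node HM /\ a = Some k.
Proof.
  intros R Hh; split.
  - intros B; inversion B as [? NH | ? k' HM' R' Hh' | ? ? ? ? ? ? ? ? ? Np]; subst.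
    + exfalso; apply NH; eapply hred_has_hnf; eassumption.
    + destruct (hred_hnf_unique _ _ _ _ _ R Hh R' Hh'); subst; auto.
    + congruence.
  - intros [-> ->]; eapply bt_root; eassumption.
Qed.

Lemma bt_at_nil_no_hnf M nd a : ~ has_hnf M -> bt_at M [] nd a <-> nd = NBot /\ a = None.
Proof.
  intros NH; split.
  - intros B; inversion B; subst; auto; exfalso; apply NH; eapply hred_has_hnf; eassumption.
  - intros [-> ->]; constructor; assumption.
Qed.

Lemma bt_at_cons_hnf k M HM i p nd a : hred k M HM -> is_hnf HM ->
  bt_at M (i :: p) nd a <-> sk_at HM (i :: p) nd a.
Proof.
  intros R Hh; split.
  - intros B; inversion B as [| | ? k' HM' ? ? ? R' Hh' Hsk]; subst.
    destruct (hred_hnf_unique _ _ _ _ _ R Hh R' Hh'); subst; assumption.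
  - intros Hsk; eapply bt_in; [eassumption | eassumption | eassumption | discriminate].
Qed.

Lemma bt_at_cons_no_hnf M i p nd a : ~ has_hnf M -> ~ bt_at M (i :: p) nd a.
Proof. intros NH B; inversion B; subst; apply NH; eapply hred_has_hnf; eassumption. Qed.

Lemma sk_at_nil H nd a : sk_at H [] nd a <-> nd = head_node H /\ a = None.
Proof. split; [intros B; inversion B; auto | intros [-> ->]; constructor]. Qed.

Lemma bt_ge_at_nil M N : beta_star M N -> ctree_ge_at (bt_at M) (bt_at N) [].
Proof.
  intros Hb; destruct (classic (has_hnf M)) as [HH | NH].
  - destruct (has_hnf_hred _ HH) as [k [HM [R Hh]]].
    destruct (hred_hnf_beta_star _ _ _ _ R Hh Hb) as [j [HN [RN [Hj [HhN Ha]]]]].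
    apply (ctree_ge_at_single _ _ _ (head_node HN) (Some k) (Some j)); [| | exact Hj].
    + intros nd a; rewrite <- (arg_red_head_node _ _ Ha); apply bt_at_nil_hnf; assumption.
    + intros nd a; apply bt_at_nil_hnf; assumption.
  - assert (NH' : ~ has_hnf N) by (intros HH; apply NH; eapply has_hnf_beta_star; eassumption).
    apply (ctree_ge_at_single _ _ _ NBot None None); [| | exact I];
      intros nd a; apply bt_at_nil_no_hnf; assumption.
Qed.

Lemma bt_ge_at_cons i p M N :
  (forall H H', arg_red H H' -> ctree_ge_at (sk_at H) (sk_at H') (i :: p)) ->
  beta_star M N -> ctree_ge_at (bt_at M) (bt_at N) (i :: p).
Proof.
  intros Hsk Hb; destruct (classic (has_hnf M)) as [HH | NH].
  - destruct (has_hnf_hred _ HH) as [k [HM [R Hh]]].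
    destruct (hred_hnf_beta_star _ _ _ _ R Hh Hb) as [j [HN [RN [Hj [HhN Ha]]]]].
    apply (ctree_ge_at_transport _ _ (sk_at HM) (sk_at HN) _ (i :: p)); [| | apply Hsk; assumption];
      intros nd a; eapply bt_at_cons_hnf; eassumption.
  - assert (NH' : ~ has_hnf N) by (intros HH; apply NH; eapply has_hnf_beta_star; eassumption).
    apply ctree_ge_at_empty; intros nd a; apply bt_at_cons_no_hnf; assumption.
Qed.

Lemma sk_ge_at_nil H H' : arg_red H H' -> ctree_ge_at (sk_at H) (sk_at H') [].
Proof.
  intros Ha; apply (ctree_ge_at_single _ _ _ (head_node H') None None); [| | exact I];
    intros nd a; [rewrite <- (arg_red_head_node _ _ Ha) |]; apply sk_at_nil.
Qed.

Lemma sk_ge_at_cons i p H H' :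
  (forall M N, beta_star M N -> ctree_ge_at (bt_at M) (bt_at N) p) ->
  (forall H H', arg_red H H' -> ctree_ge_at (sk_at H) (sk_at H') p) ->
  arg_red H H' -> ctree_ge_at (sk_at H) (sk_at H') (i :: p).
Proof.
  intros Hbt Hsk Ha.
  destruct Ha as [x | t t' Ha | t t' u u' Ha Hb]; destruct i as [| [| [| i]]];
    try (apply ctree_ge_at_empty; intros nd a B; inversion B; fail).
  - apply (ctree_ge_at_transport _ _ (sk_at t) (sk_at t') _ p); [| | apply Hsk, Ha];
      intros nd a; (split; intros B; [inversion B; subst; assumption | apply sk_lam, B]).
  - apply (ctree_ge_at_transport _ _ (sk_at t) (sk_at t') _ p); [| | apply Hsk, Ha];
      intros nd a; (split; intros B; [inversion B; subst; assumption | apply sk_fun, B]).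
  - apply (ctree_ge_at_transport _ _ (bt_at u) (bt_at u') _ p); [| | apply Hbt, Hb];
      intros nd a; (split; intros B; [inversion B; subst; assumption | apply sk_arg, B]).
Qed.

Lemma beta_star_ctree_ge_at p :
  (forall M N, beta_star M N -> ctree_ge_at (bt_at M) (bt_at N) p) /\
  (forall H H', arg_red H H' -> ctree_ge_at (sk_at H) (sk_at H') p).
Proof.
  induction p as [| i p [IHbt IHsk]].
  - split; intros; [apply bt_ge_at_nil | apply sk_ge_at_nil]; assumption.
  - assert (Hsk : forall H H', arg_red H H' -> ctree_ge_at (sk_at H) (sk_at H') (i :: p))
      by (intros; apply sk_ge_at_cons; assumption).
    split; [intros; apply bt_ge_at_cons |]; assumption.
Qed.

Theorem proposition4p5 : forall M N : term,
  beta_star M N -> ctree_ge (BTc M) (BTc N).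
Proof.
  intros M N Hb; split; intros p; apply (proj1 (beta_star_ctree_ge_at p)); exact Hb.
Qed.
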